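(* Let $Q\subset\mathbb{R}^2$ be a convex polygon with $n\ge 4$ vertices, no four of which lie on a common circle. Consider all circles passing through three vertices of $Q$. Let $s_+,t_+,u_+$ be the numbers of full circles that are neighboring, disjoint and intermediate, respectively, and let $s_-,t_-,u_-$ be the numbers of empty circles that are neighboring, disjoint and intermediate, respectively. Then $$s_+-t_+=s_--t_-=2,\qquad s_++t_++u_+=s_-+t_-+u_-=n-2.$$
   Context: A circle through three vertices of $Q$ is called empty if all remaining vertices of $Q$ lie strictly outside it, and full if all remaining vertices of $Q$ lie strictly inside it. Such a circle is called neighboring if its three vertices are consecutive vertices of $Q$; disjoint if no two of its three vertices are adjacent vertices of $Q$; and intermediate in all other cases. *)

From HB Require Import structures.
From mathcomp Require Import all_boot all_order all_algebra.
From mathcomp Require Import boolp.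
Set Implicit Arguments. Unset Strict Implicit. Unset Printing Implicit Defensive.
Import Order.TTheory GRing.Theory Num.Theory.
Local Open Scope ring_scope.

Definition pt (R : realFieldType) := (R * R)%type.

Definition d2 (R : realFieldType) (a b : pt R) : R :=
  (a.1 - b.1) ^+ 2 + (a.2 - b.2) ^+ 2.

Definition orient (R : realFieldType) (a b c : pt R) : R :=
  (b.1 - a.1) * (c.2 - a.2) - (b.2 - a.2) * (c.1 - a.1).

Definition nxt (n : nat) (i : 'I_n) : nat := (i.+1 %% n)%N.

Definition succ_ord (n : nat) (i : 'I_n) : 'I_n :=
  Ordinal (ltn_pmod i.+1 (leq_ltn_trans (leq0n i) (ltn_ord i))).

(* p : 'I_n -> R^2 lists the vertices of a convex polygon in cyclic order:
   for every edge p_i p_(i+1), all other vertices lie strictly on the same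
   side of the line through it (all counterclockwise or all clockwise). *)
Definition convex_polygon (R : realFieldType) (n : nat) (p : 'I_n -> pt R) : Prop :=
  (forall i j : 'I_n, (j : nat) != i -> (j : nat) != nxt i ->
     0 < orient (p i) (p (succ_ord i)) (p j)) \/
  (forall i j : 'I_n, (j : nat) != i -> (j : nat) != nxt i ->
     orient (p i) (p (succ_ord i)) (p j) < 0).

Definition no_four_concyclic (R : realFieldType) (n : nat) (p : 'I_n -> pt R) : Prop :=
  forall (A : {set 'I_n}) (c : pt R) (r : R), #|A| = 4%N ->
    ~ (forall i, i \in A -> d2 (p i) c = r).

Definition full_circle (R : realFieldType) (n : nat) (p : 'I_n -> pt R)
  (A : {set 'I_n}) : Prop :=
  exists (c : pt R) (r : R), (forall i, i \in A -> d2 (p i) c = r) /\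
    (forall j, j \notin A -> d2 (p j) c < r).

Definition empty_circle (R : realFieldType) (n : nat) (p : 'I_n -> pt R)
  (A : {set 'I_n}) : Prop :=
  exists (c : pt R) (r : R), (forall i, i \in A -> d2 (p i) c = r) /\
    (forall j, j \notin A -> r < d2 (p j) c).

Definition adjacent (n : nat) (i j : 'I_n) : bool :=
  ((j : nat) == nxt i) || ((i : nat) == nxt j).

Definition neighboring (n : nat) (A : {set 'I_n}) : bool :=
  [exists i : 'I_n, A == [set j : 'I_n | (j : nat) \in
      [:: (i : nat); (i.+1 %% n)%N; (i.+2 %% n)%N]]].

Definition disjoint3 (n : nat) (A : {set 'I_n}) : bool :=
  [forall i in A, forall j in A, ~~ adjacent i j].

Definition intermediate (n : nat) (A : {set 'I_n}) : bool :=
  ~~ neighboring A && ~~ disjoint3 A.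

Definition count_full (R : realFieldType) (n : nat) (p : 'I_n -> pt R)
  (K : {set 'I_n} -> bool) : nat :=
  #|[set A : {set 'I_n} | [&& #|A| == 3%N, K A & `[< full_circle p A >]]]|.

Definition count_empty (R : realFieldType) (n : nat) (p : 'I_n -> pt R)
  (K : {set 'I_n} -> bool) : nat :=
  #|[set A : {set 'I_n} | [&& #|A| == 3%N, K A & `[< empty_circle p A >]]]|.

(* Lift each vertex p_i to (p_i, z_i), with z_i = |p_i|^2 for full circles
   and z_i = -|p_i|^2 for empty ones.  A circle through three vertices is
   full (resp. empty) exactly when the plane through their lifts lies
   strictly above every other lift, i.e. when the three vertices span an
   upper facet of the lifts; no four concyclic vertices means no four
   coplanar lifts.
   The planes through the lifts of two vertices a and b form a pencil, and
   the facets containing a and b correspond to the vertices extremal in that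
   pencil: there are as many on each side of the line ab when both sides are
   occupied, and exactly one when ab is an edge of Q.  Telescoping this
   balance over the diagonals from a vertex j shows that j is the middle
   index of exactly one facet unless it is the first or the last index, so
   there are n - 2 facets.  Counting the pairs (edge of Q, facet containing
   it) gives 2 s + u = n, which with s + t + u = n - 2 yields s - t = 2. *)
From HB Require Import structures.
From mathcomp Require Import all_boot all_order all_algebra.
From mathcomp Require Import boolp.
From mathcomp Require Import ring lra zify.
Set Implicit Arguments. Unset Strict Implicit. Unset Printing Implicit Defensive.
Import Order.TTheory GRing.Theory Num.Theory.
Local Open Scope ring_scope.

Section FiniteSets.
Variable T : finType.
Implicit Types (a b c d : T) (A : {set T}).

Lemma in_set3 a b c x : (x \in [set a; b; c]) = [|| x == a, x == b | x == c].
Proof. by rewrite !inE orbA. Qed.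

Lemma cards3 a b c : a != b -> a != c -> b != c -> #|[set a; b; c]| = 3%N.
Proof.
move=> hab hac hbc; rewrite setUC cardsU1 cardsU1 cards1 !inE.
by rewrite (negbTE hab) eq_sym (negbTE hac) eq_sym (negbTE hbc).
Qed.

Lemma card3_set3E A a b c : a \in A -> b \in A -> c \in A ->
  a != b -> a != c -> b != c -> #|A| = 3%N -> A = [set a; b; c].
Proof.
move=> ha hb hc hab hac hbc hA; apply/eqP.
rewrite eq_sym eqEcard hA cards3 // leqnn andbT.
by apply/subsetP => x; rewrite in_set3 => /or3P [] /eqP ->.
Qed.

Lemma card3_third A a b : #|A| = 3%N -> a \in A -> b \in A -> a != b ->
  exists c, [/\ c != a, c != b & A = [set a; b; c]].
Proof.
move=> hA ha hb hab.
have [c hc] : exists c, A :\ a :\ b = [set c].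
  apply/cards1P; move: hA.
  by rewrite (cardsD1 a A) ha (cardsD1 b (A :\ a)) !inE eq_sym hab hb => -[] /[!add0n] ->.
have : c \in A :\ a :\ b by rewrite hc set11.
rewrite !inE => /and3P [hcb hca hcA].
by exists c; split => //; apply: card3_set3E; rewrite // eq_sym.
Qed.

Lemma card3_set3 A : #|A| = 3%N ->
  exists a b c, [/\ a != b, a != c, b != c & A = [set a; b; c]].
Proof.
move=> hA.
have [a ha] : exists a, a \in A by apply/card_gt0P; rewrite hA.
have [b] : exists b, b \in A :\ a.
  by apply/card_gt0P; move: hA; rewrite (cardsD1 a A) ha => -[] /[!add0n] ->.
rewrite !inE => /andP [hba hbA].
have [c [hca hcb ->]] := card3_third hA ha hbA (contra_neq esym hba).
by exists a, b, c; split; rewrite // eq_sym.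
Qed.

Lemma card_ge4 A a b c d : a \in A -> b \in A -> c \in A -> d \in A ->
  a != b -> a != c -> a != d -> b != c -> b != d -> c != d -> (4 <= #|A|)%N.
Proof.
move=> ha hb hc hd hab hac had hbc hbd hcd; apply/card_geqP.
exists [:: a; b; c; d]; split => //=; last by move=> x; rewrite !inE => /or4P [] /eqP ->.
by rewrite !inE !negb_or hab hac had hbc hbd hcd.
Qed.

Lemma sum_bool_card (P : pred T) : (\sum_x (P x : nat) = #|P|)%N.
Proof.
rewrite -sum1_card [RHS]big_mkcond /=; apply: eq_bigr => x _.
by rewrite unfold_in; case: (P x).
Qed.

Lemma sum_in_bool_card A (P : pred T) :
  (\sum_(x in A) (P x : nat))%N = #|[set x in A | P x]|.
Proof.
rewrite big_mkcond -(sum_bool_card (mem [set x in A | P x])) /=.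
by apply: eq_bigr => x _; rewrite !inE; case: (x \in A).
Qed.

End FiniteSets.

Section AffineFunctions.
Variable R : realFieldType.
Implicit Types (x pa pb pc pv : pt R).

Definition affine (al be ga : R) x := al * x.1 + be * x.2 + ga.

(* Up to sign, the determinant of the four lifted points (x.1, x.2, z, 1),
   expanded along the z column: it vanishes iff the four lifts are coplanar. *)
Definition lift_det pa pb pc pv (za zb zc zv : R) :=
  orient pb pc pv * za - orient pa pc pv * zb + orient pa pb pv * zc
  - orient pa pb pc * zv.

Lemma affine_interpolation pa pb pc za zb zc : orient pa pb pc != 0 ->
  exists al be ga, [/\ affine al be ga pa = za, affine al be ga pb = zb &
                       affine al be ga pc = zc].
Proof.
move=> hD.
exists (((pb.2 - pc.2) * za + (pc.2 - pa.2) * zb + (pa.2 - pb.2) * zc) / orient pa pb pc).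
exists (((pc.1 - pb.1) * za + (pa.1 - pc.1) * zb + (pb.1 - pa.1) * zc) / orient pa pb pc).
exists (((pb.1 * pc.2 - pb.2 * pc.1) * za + (pc.1 * pa.2 - pc.2 * pa.1) * zb
   + (pa.1 * pb.2 - pa.2 * pb.1) * zc) / orient pa pb pc).
by move: hD; rewrite /affine /orient => hD; split; field.
Qed.

Lemma lift_det_affine pa pb pc pv al be ga za zb zc zv :
  affine al be ga pa = za -> affine al be ga pb = zb ->
  lift_det pa pb pc pv za zb zc zv =
  orient pa pb pv * (zc - affine al be ga pc) - orient pa pb pc * (zv - affine al be ga pv).
Proof. by move=> <- <-; rewrite /lift_det /affine /orient; ring. Qed.

Lemma lift_detN pa pb pc pv za zb zc zv :
  lift_det pa pb pc pv (- za) (- zb) (- zc) (- zv) = - lift_det pa pb pc pv za zb zc zv.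
Proof. by rewrite /lift_det; ring. Qed.

(* A three-term Grassmann-Pluecker relation. *)
Lemma orient_exchange (o e u v w : pt R) :
  orient o u w * orient o e v =
  orient o u v * orient o e w + orient o v w * orient o e u.
Proof. by rewrite /orient; ring. Qed.

End AffineFunctions.

(* In the pencil of planes through two lifted points, the other points are
   described by the side D w of the line on which they lie and by the slope
   mu w of the plane of the pencil through them; y spans a facet with the two
   base points iff y is extremal: every other w lies below the plane of y. *)
Section Pencil.
Variables (R : realFieldType) (T : finType) (V : pred T) (D mu : T -> R).

Definition extremal y :=
  V y && [forall w, (V w && (w != y)) ==> (0 < D w * (mu y - mu w))].

Lemma extremalP y :
  reflect (V y /\ forall w, V w -> w != y -> 0 < D w * (mu y - mu w)) (extremal y).
Proof.
apply: (iffP andP) => [[hy /forallP h] | [hy h]]; split => //.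
  by move=> w hw hne; move/implyP: (h w); apply; rewrite hw hne.
by apply/forallP => w; apply/implyP => /andP [] /h; apply.
Qed.

Lemma extremal_pos_uniq y y' : extremal y -> extremal y' -> 0 < D y -> 0 < D y' -> y = y'.
Proof.
move=> /extremalP [hy hg] /extremalP [hy' hg'] hDy hDy'.
apply/eqP/negP => /negP hne.
have h1 := hg y' hy' (contra_neq esym hne).
have h2 := hg' y hy hne.
nra.
Qed.

Hypothesis D_neq0 : forall w, V w -> D w != 0.
Hypothesis mu_inj : {in V &, injective mu}.

(* The extremal point is the positive point of largest slope; a negative
   extremal point, when there is one, makes it beat the negative points too. *)
Lemma extremal_pos_exists : (exists y, V y && (0 < D y)) ->
  ((forall w, V w -> 0 < D w) \/ (exists y, extremal y && (D y < 0))) ->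
  exists y, extremal y && (0 < D y).
Proof.
move=> [i0 hi0] hcase.
have [ym /andP [hVm hDm] hmax] := @real_arg_maxP R T i0 (fun i => V i && (0 < D i)) mu
  hi0 (fun i _ => num_real (mu i)).
exists ym; rewrite hDm andbT; apply/extremalP; split => // w hw hne.
have hmuw : mu w != mu ym by apply: contra hne => /eqP e; apply/eqP; apply: mu_inj.
have := D_neq0 hw; rewrite neq_lt => /orP [hneg | hpos]; last first.
  have := hmax w; rewrite hw hpos /= => /(_ isT) hle.
  have : mu w < mu ym by rewrite lt_neqAle hmuw hle.
  nra.
case: hcase => [hall | [y0 /andP [/extremalP [hy0 hg0] hD0]]].
  by have := hall w hw; lra.
have hy0m : ym != y0 by apply/eqP => e; move: hDm; rewrite e; lra.
have h1 := hg0 ym hVm hy0m.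
have [-> | ne] := eqVneq w y0; first nra.
have h2 := hg0 w hw ne.
nra.
Qed.

Lemma card_extremal_one_side : (forall w, V w -> 0 < D w) -> (exists y, V y) ->
  #|[pred y | extremal y]| = 1%N.
Proof.
move=> hall [y0 hy0].
have [|y /andP [hy hDy]] := extremal_pos_exists _ (or_introl hall).
  by exists y0; rewrite hy0 hall.
apply: (@eq_card1 _ y) => w; rewrite !inE.
apply/idP/eqP => [hw | -> //].
by apply: extremal_pos_uniq => //; apply: hall; case/andP: hw.
Qed.

End Pencil.

Lemma extremalN (R : realFieldType) (T : finType) (V : pred T) (D mu : T -> R) y :
  extremal V (fun w => - D w) (fun w => - mu w) y = extremal V D mu y.
Proof.
rewrite /extremal; congr (_ && _); apply: eq_forallb => w.
by congr (_ ==> _); congr (0 < _); ring.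
Qed.

Lemma card_extremal_balance (R : realFieldType) (T : finType) (V : pred T) (D mu : T -> R) :
  (forall w, V w -> D w != 0) -> {in V &, injective mu} ->
  (exists y, V y && (0 < D y)) -> (exists y, V y && (D y < 0)) ->
  #|[pred y | extremal V D mu y && (0 < D y)]| =
  #|[pred y | extremal V D mu y && (D y < 0)]|.
Proof.
move=> hD hmu hp hm.
have hDN w : V w -> - D w != 0 by move/hD; rewrite oppr_eq0.
have hmuN : {in V &, injective (fun w => - mu w)}.
  by move=> x y hx hy /= /oppr_inj; apply: hmu.
have uniqN y y' : extremal V D mu y -> extremal V D mu y' -> D y < 0 -> D y' < 0 -> y = y'.
  move=> g g' d d'; apply: (@extremal_pos_uniq _ _ V (fun w => - D w) (fun w => - mu w));
    by rewrite ?extremalN // oppr_gt0.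
have [[y1 /andP [g1 d1]] | nop] := pselect (exists y, extremal V D mu y && (0 < D y)).
  have [y2 /andP [g2 d2]] : exists y, extremal V D mu y && (D y < 0).
    have e1 : exists y, V y && (0 < - D y).
      by case: hm => y /andP [hy hDy]; exists y; rewrite hy oppr_gt0.
    have e2 : exists y, extremal V (fun w => - D w) (fun w => - mu w) y && (- D y < 0).
      by exists y1; rewrite extremalN g1 oppr_lt0.
    have [y2] := extremal_pos_exists hDN hmuN e1 (or_intror e2).
    by rewrite extremalN oppr_gt0 => ?; exists y2.
  rewrite (@eq_card1 _ y1) ?(@eq_card1 _ y2) // => w; rewrite !inE;
    apply/idP/eqP => [/andP [gw dw] | ->]; rewrite ?g1 ?d1 ?g2 ?d2 //.
    by apply: uniqN.
  by apply: (@extremal_pos_uniq _ _ V D mu).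
have nom : ~ exists y, extremal V D mu y && (D y < 0).
  by move=> hex; apply: nop; apply: extremal_pos_exists => //; right.
rewrite !eq_card0 // => w; rewrite !inE; apply/negP => /andP [g d].
  by apply: nom; exists w; rewrite g d.
by apply: nop; exists w; rewrite g d.
Qed.

Section CyclicSuccessor.
Variable n : nat.
Implicit Types i j : 'I_n.

Lemma succ_ordE i : succ_ord i = (if (i.+1 < n)%N then i.+1 else 0%N) :> nat.
Proof.
rewrite /succ_ord /=; case: ltnP => h; first by rewrite modn_small.
have -> : i.+1 = n by apply/eqP; rewrite eqn_leq h ltn_ord.
by rewrite modnn.
Qed.

Lemma succ_ord_val i j : j = i.+1 :> nat -> j = succ_ord i.
Proof. by move=> h; apply: ord_inj; rewrite succ_ordE -h ltn_ord. Qed.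

Lemma iter_succ_ordE k i : iter k (@succ_ord n) i = ((i + k) %% n)%N :> nat.
Proof.
elim: k => [|k IH] /=; first by rewrite addn0 modn_small.
by rewrite IH -[((i + k) %% n).+1]addn1 modnDml addn1 addnS.
Qed.

Lemma iter_succ_ord_neq k l i : (k < l < n)%N ->
  iter k (@succ_ord n) i != iter l (@succ_ord n) i.
Proof.
move=> /andP [hkl hl]; apply/eqP => /(congr1 (@nat_of_ord n)) /=.
rewrite !iter_succ_ordE => /eqP; rewrite eqn_modDl !modn_small; lia.
Qed.

Lemma succ_ord_neq i : (1 < n)%N -> succ_ord i != i.
Proof.
move=> hn; apply/eqP => /(congr1 (@nat_of_ord n)); rewrite succ_ordE.
by have := ltn_ord i; case: (ltnP i.+1 n) => /= *; lia.
Qed.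

Lemma succ_ord_inj : injective (@succ_ord n).
Proof.
move=> x y /(congr1 (@nat_of_ord n)); rewrite !succ_ordE.
have := ltn_ord x; have := ltn_ord y.
by case: (ltnP x.+1 n); case: (ltnP y.+1 n) => /= *; apply: ord_inj; lia.
Qed.

Lemma ltn_ord_neq (x y : 'I_n) : (x < y)%N -> x != y.
Proof. by move=> h; apply/eqP => e; move: h; rewrite e ltnn. Qed.

Lemma sort3 (a b c : 'I_n) : a != b -> a != c -> b != c ->
  exists lo mid hi : 'I_n,
    [/\ (lo < mid < hi)%N & {subset [:: lo; mid; hi] <= [:: a; b; c]}].
Proof.
move=> /eqP hab /eqP hac /eqP hbc.
have [h1|h1|h1] := ltngtP a b; have [h2|h2|h2] := ltngtP b c;
  have [h3|h3|h3] := ltngtP a c;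
  try (exfalso; lia); try (by exfalso; apply: hab; apply: ord_inj);
  try (by exfalso; apply: hbc; apply: ord_inj);
  try (by exfalso; apply: hac; apply: ord_inj).
- by exists a, b, c; rewrite h1 h2; split => // w; rewrite !inE => /or3P [] /eqP ->; rewrite eqxx ?orbT.
- by exists a, c, b; rewrite h3 h2; split => // w; rewrite !inE => /or3P [] /eqP ->; rewrite eqxx ?orbT.
- by exists c, a, b; rewrite h3 h1; split => // w; rewrite !inE => /or3P [] /eqP ->; rewrite eqxx ?orbT.
- by exists b, a, c; rewrite h1 h3; split => // w; rewrite !inE => /or3P [] /eqP ->; rewrite eqxx ?orbT.
- by exists b, c, a; rewrite h2 h3; split => // w; rewrite !inE => /or3P [] /eqP ->; rewrite eqxx ?orbT.
- by exists c, b, a; rewrite h2 h1; split => // w; rewrite !inE => /or3P [] /eqP ->; rewrite eqxx ?orbT.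
Qed.

End CyclicSuccessor.

Section Polygon.
Variables (R : realFieldType) (n : nat) (p : 'I_n -> pt R) (eps : R) (z : 'I_n -> R).
Implicit Types (A : {set 'I_n}) (a b c i j k m v w x y : 'I_n).

(* [eps] is the sign making the polygon counterclockwise. *)
Definition sorient i k m := eps * orient (p i) (p k) (p m).
Definition slift_det i k m v :=
  eps * lift_det (p i) (p k) (p m) (p v) (z i) (z k) (z m) (z v).

Definition upper_facet A : Prop := exists al be ga,
  (forall i, i \in A -> affine al be ga (p i) = z i) /\
  (forall j, j \notin A -> z j < affine al be ga (p j)).

Definition upper_facetb A : bool := `[< upper_facet A >].

Lemma upper_facetP A : reflect (upper_facet A) (upper_facetb A).
Proof. exact: asboolP. Qed.

Definition facets := [set A : {set 'I_n} | (#|A| == 3%N) && upper_facetb A].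

Lemma sorient_orient a b c : sorient a b c != 0 -> orient (p a) (p b) (p c) != 0.
Proof. by apply: contra => /eqP h; rewrite /sorient h mulr0. Qed.

Lemma slift_det_affine a b c v al be ga : affine al be ga (p a) = z a ->
  affine al be ga (p b) = z b -> affine al be ga (p c) = z c ->
  slift_det a b c v = - sorient a b c * (z v - affine al be ga (p v)).
Proof.
move=> ha hb hc; rewrite /slift_det (lift_det_affine _ _ _ _ ha hb) hc subrr.
by rewrite /sorient; ring.
Qed.

Lemma upper_facet3 a b c : sorient a b c != 0 ->
  upper_facet [set a; b; c] <->
  forall v, v \notin [set a; b; c] -> 0 < slift_det a b c v * sorient a b c.
Proof.
move=> hD.
have sign al be ga v : affine al be ga (p a) = z a -> affine al be ga (p b) = z b ->
    affine al be ga (p c) = z c ->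
    (0 < slift_det a b c v * sorient a b c) = (z v < affine al be ga (p v)).
  move=> ha hb hc; rewrite (slift_det_affine v ha hb hc).
  have -> : - sorient a b c * (z v - affine al be ga (p v)) * sorient a b c =
    sorient a b c ^+ 2 * (affine al be ga (p v) - z v) by ring.
  by rewrite pmulr_rgt0 ?subr_gt0 // exprn_even_gt0 //= hD.
split => [[al [be [ga [hA hN]]]] v hv | H].
  by rewrite (sign al be ga) ?hN // hA // !inE eqxx ?orbT.
have [al [be [ga [ha hb hc]]]] :=
  affine_interpolation (z a) (z b) (z c) (sorient_orient hD).
exists al, be, ga; split => [i | j hj]; first by rewrite in_set3 => /or3P [] /eqP ->.
by rewrite -(sign al be ga) // H.
Qed.

Lemma sorient_rot i k m : sorient i k m = sorient k m i.
Proof. by rewrite /sorient /orient; ring. Qed.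

Lemma sorient_swap12 i k m : sorient k i m = - sorient i k m.
Proof. by rewrite /sorient /orient; ring. Qed.

Lemma sorient_swap23 i k m : sorient i m k = - sorient i k m.
Proof. by rewrite /sorient /orient; ring. Qed.

Lemma sorient_xxy i k : sorient i i k = 0.
Proof. by rewrite /sorient /orient; ring. Qed.

Lemma sorient_xyx i k : sorient i k i = 0.
Proof. by rewrite /sorient /orient; ring. Qed.

Lemma sorient_yxx i k : sorient k i i = 0.
Proof. by rewrite /sorient /orient; ring. Qed.

Lemma sorient_trans o e u v w : 0 < sorient o e u -> 0 < sorient o e v ->
  0 < sorient o e w -> 0 < sorient o u v -> 0 < sorient o v w -> 0 < sorient o u w.
Proof.
move=> heu hev hew huv hvw.
have : sorient o u w * sorient o e v =
    sorient o u v * sorient o e w + sorient o v w * sorient o e u.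
  have eps2 (r s : R) : eps * r * (eps * s) = eps ^+ 2 * (r * s) by ring.
  by rewrite /sorient !eps2 orient_exchange; ring.
by rewrite -(pmulr_lgt0 _ hev) => ->; rewrite addr_gt0 // mulr_gt0.
Qed.

Hypothesis convex : forall i w, w != i -> w != succ_ord i ->
  0 < sorient i (succ_ord i) w.

Lemma sorient_succ i w : (i.+1 < n)%N -> (w : nat) != i -> (w : nat) != i.+1 ->
  0 < sorient i (succ_ord i) w.
Proof.
move=> hi hwi hws; apply: convex; first by apply: contraNneq hwi => ->.
by apply: contraNneq hws => ->; rewrite succ_ordE hi.
Qed.

Lemma sorient_sorted i k m : (i < k < m)%N -> 0 < sorient i k m.
Proof.
move=> /andP [hik hkm].
have edge0 w : (i.+1 < w)%N -> 0 < sorient i (succ_ord i) w.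
  by move=> hw; apply: sorient_succ; have := ltn_ord w; lia.
have [d hd] : exists d, m = (k + d.+1)%N :> nat by exists (m - k.+1)%N; lia.
elim: d m hkm hd => [|d IH] m hkm hd; have := ltn_ord m => hm.
  have -> : m = succ_ord k by apply: succ_ord_val; lia.
  by rewrite sorient_rot; apply: sorient_succ; lia.
have hm' : (k + d.+1 < n)%N by lia.
pose m' := Ordinal hm'.
have hkm' : 0 < sorient i k m' by apply: IH => /=; lia.
have hm'm : 0 < sorient i m' m.
  have -> : m = succ_ord m' by apply: succ_ord_val => /=; lia.
  by rewrite sorient_rot; apply: sorient_succ => /=; lia.
have [hk | hk] := eqVneq (k : nat) i.+1.
  by rewrite (succ_ord_val hk); apply: edge0; lia.
by apply: (@sorient_trans i (succ_ord i) k m') => //; apply: edge0 => /=; lia.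
Qed.

Lemma sorient_neq0 a b c : a != b -> b != c -> a != c -> sorient a b c != 0.
Proof.
have sorted x y w : (x < y)%N -> (y < w)%N -> sorient x y w != 0.
  by move=> hxy hyw; rewrite lt0r_neq0 // sorient_sorted ?hxy.
move=> /eqP hab /eqP hbc /eqP hac.
have [h1|h1|h1] := ltngtP a b; have [h2|h2|h2] := ltngtP b c;
  have [h3|h3|h3] := ltngtP a c;
  try (exfalso; lia); try (by exfalso; apply: hab; apply: ord_inj);
  try (by exfalso; apply: hbc; apply: ord_inj);
  try (by exfalso; apply: hac; apply: ord_inj).
all: first [ by apply: sorted; lia
 | by rewrite sorient_swap23 oppr_eq0; apply: sorted; lia
 | by rewrite sorient_swap12 oppr_eq0; apply: sorted; lia
 | by rewrite sorient_rot; apply: sorted; lia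
 | by rewrite sorient_rot sorient_rot; apply: sorted; lia
 | by rewrite sorient_swap12 oppr_eq0 -sorient_rot; apply: sorted; lia ].
Qed.

Lemma exists_third a b : (2 < n)%N -> exists c, (c != a) && (c != b).
Proof.
move=> hn; have : (0 < #|~: [set a; b]|)%N.
  by rewrite cardsCs setCK card_ord cards2; case: (a != b); lia.
by case/card_gt0P => c; rewrite !inE negb_or; exists c.
Qed.

Definition others a b := [pred w | (w != a) && (w != b)].

Lemma others_sorient a b y : a != b -> y \in others a b -> sorient a b y != 0.
Proof. by move=> hab; rewrite inE => /andP [hya hyb]; apply: sorient_neq0; rewrite // eq_sym. Qed.

Lemma not_others_sorient a b y : y \notin others a b -> sorient a b y = 0.
Proof.
by rewrite inE negb_and !negbK => /orP [] /eqP ->; rewrite ?sorient_xyx ?sorient_yxx.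
Qed.

Hypothesis generic : forall a b c v, a != b -> a != c -> a != v ->
  b != c -> b != v -> c != v -> slift_det a b c v != 0.
Hypothesis n_gt2 : (2 < n)%N.

(* [mu y] is the slope, in the pencil of planes through the lifts of [a] and
   [b], of the plane through the lift of [y]. *)
Lemma pencil a b : a != b -> exists mu : 'I_n -> R,
  {in others a b &, injective mu} /\
  forall y, y \in others a b ->
    (upper_facet [set a; b; y] <-> extremal (others a b) (sorient a b) mu y).
Proof.
move=> hab.
have [c0 hc0] := exists_third a b n_gt2.
have [al [be [ga [ha hb _]]]] :=
  affine_interpolation (z a) (z b) (z c0) (sorient_orient (others_sorient hab hc0)).
pose mu x := (z x - affine al be ga (p x)) / sorient a b x.
have slift_mu x y : x \in others a b -> y \in others a b ->
    slift_det a b x y = sorient a b x * sorient a b y * (mu x - mu y).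
  move=> hx hy; have := others_sorient hab hx; have := others_sorient hab hy.
  rewrite /slift_det (lift_det_affine _ _ _ _ ha hb) /mu /sorient.
  by rewrite !mulf_eq0 !negb_or => /andP [he hoy] /andP [_ hox]; field; rewrite hoy he.
exists mu; split.
  move=> x y hx hy e; apply/eqP; apply: contraT => hxy.
  have : slift_det a b x y != 0.
    by move: hx hy; rewrite !inE => /andP [? ?] /andP [? ?]; apply: generic; rewrite // eq_sym.
  by rewrite slift_mu // e subrr mulr0 eqxx.
move=> y hy; rewrite upper_facet3 ?others_sorient //.
have sign v : v \in others a b ->
    (0 < slift_det a b y v * sorient a b y) = (0 < sorient a b v * (mu y - mu v)).
  move=> hv; rewrite slift_mu //.
  have -> : sorient a b y * sorient a b v * (mu y - mu v) * sorient a b y =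
     sorient a b y ^+ 2 * (sorient a b v * (mu y - mu v)) by ring.
  by rewrite pmulr_rgt0 // exprn_even_gt0 //= others_sorient.
split => [H | /extremalP [_ H] v].
  apply/extremalP; split => // w hw hwy; rewrite -sign //; apply: H.
  by move: hw; rewrite !inE => /andP [/negbTE -> /negbTE ->]; rewrite (negbTE hwy).
rewrite !inE !negb_or => /andP [/andP [hva hvb] hvy].
by rewrite sign ?inE ?hva ?hvb //; apply: H; rewrite ?inE ?hva.
Qed.

Let succ_neq i : succ_ord i != i := succ_ord_neq i (ltnW n_gt2).

Lemma edge_pencil i : exists mu : 'I_n -> R,
  (forall y, y \in others i (succ_ord i) -> (upper_facet [set i; succ_ord i; y] <->
     extremal (others i (succ_ord i)) (sorient i (succ_ord i)) mu y)) /\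
  #|[pred y | extremal (others i (succ_ord i)) (sorient i (succ_ord i)) mu y]| = 1%N.
Proof.
have his : i != succ_ord i by rewrite eq_sym succ_neq.
have [mu [mu_inj hmu]] := pencil his.
exists mu; split => //; apply: card_extremal_one_side mu_inj _ _.
- by move=> w; apply: others_sorient.
- by move=> w /andP [hwi hws]; apply: convex.
- by have [c hc] := exists_third i (succ_ord i) n_gt2; exists c.
Qed.

Lemma card_facets_edge i :
  #|[set A in facets | (i \in A) && (succ_ord i \in A)]| = 1%N.
Proof.
set s := succ_ord i.
have his : i != s by rewrite eq_sym succ_neq.
have [mu [hmu /mem_card1 [y0 hy0]]] := edge_pencil i.
have : extremal (others i s) (sorient i s) mu y0 by have := hy0 y0; rewrite !inE eqxx.
move=> /[dup] /andP [y0_others _]; rewrite -hmu // => y0_facet.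
have := y0_others; rewrite inE => /andP [hy0i hy0s].
rewrite (@eq_card1 _ [set i; s; y0]) // => A; rewrite !inE.
apply/idP/eqP => [/andP [/andP [/eqP h3 hA] /andP [hi hsi]] | ->].
  have [w [hwi hws eA]] := card3_third h3 hi hsi his; rewrite eA in hA *.
  have w_others : w \in others i s by rewrite inE hwi hws.
  move: hA => /upper_facetP /(hmu w w_others) hw.
  by have := hy0 w; rewrite !inE hw => /esym /eqP ->.
have -> : #|[set i; s; y0]| = 3%N by rewrite cards3 // eq_sym.
by rewrite !in_set3 !eqxx orbT /= andbT; apply/upper_facetP.
Qed.

Definition ccw_facet j x y : bool := (0 < sorient j x y) && upper_facetb [set j; x; y].

Lemma ccw_facet_extremal j x (mu : 'I_n -> R) : x != j ->
  (forall y, y \in others j x ->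
     (upper_facet [set j; x; y] <-> extremal (others j x) (sorient j x) mu y)) ->
  forall y, ccw_facet j x y = extremal (others j x) (sorient j x) mu y && (0 < sorient j x y) /\
            ccw_facet j y x = extremal (others j x) (sorient j x) mu y && (sorient j x y < 0).
Proof.
move=> hxj hmu y.
rewrite /ccw_facet (sorient_swap23 j x y) oppr_gt0.
have -> : [set j; y; x] = [set j; x; y].
  by apply/setP => w; rewrite !in_set3; congr (_ || _); rewrite orbC.
case: (boolP (y \in others j x)) => hy.
  have -> : upper_facetb [set j; x; y] = extremal (others j x) (sorient j x) mu y.
    by apply/idP/idP => [/upper_facetP /(hmu y hy) | /(hmu y hy) /upper_facetP].
  by split; apply: andbC.
have -> : extremal (others j x) (sorient j x) mu y = false.
  by apply/negbTE; apply: contra hy => /andP [].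
by rewrite not_others_sorient // ltxx andbF.
Qed.

Section MiddleVertex.
Variable j : 'I_n.
Hypotheses (j_gt0 : (0 < j)%N) (j_lt : (j.+1 < n)%N).

Let succ_jE : succ_ord j = j.+1 :> nat.
Proof. by rewrite succ_ordE j_lt. Qed.

Lemma sum_ccw_facet_succ : (\sum_y ccw_facet j (succ_ord j) y)%N = 1%N.
Proof.
have [mu [hmu <-]] := edge_pencil j.
rewrite sum_bool_card; apply: eq_card => y.
rewrite unfold_in !inE -/(ccw_facet j (succ_ord j) y).
have [-> _] := ccw_facet_extremal (succ_neq j) hmu y.
by case: (boolP (extremal _ _ _ y)) => //= /andP [/andP [hyj hys] _]; apply: convex.
Qed.

Lemma sum_ccw_facet_to_succ : (\sum_y ccw_facet j y (succ_ord j))%N = 0%N.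
Proof.
set s := succ_ord j.
have hsj : s != j by apply: succ_neq.
have [mu [_ hmu]] := pencil (contra_neq esym hsj).
rewrite big1 // => y _; have [_ ->] := ccw_facet_extremal hsj hmu y.
case: (boolP (extremal _ _ _ y)) => //= /andP [/andP [hyj hys] _].
by rewrite ltNge ltW // convex.
Qed.

(* Facets on the two sides of a diagonal from [j] come in pairs: [j - 1] and
   [j + 1] lie on opposite sides of it. *)
Lemma sum_ccw_facet_diagonal x : (j < x)%N -> x != succ_ord j ->
  (\sum_y ccw_facet j x y)%N = (\sum_y ccw_facet j y x)%N.
Proof.
move=> hjx hxs.
have hxj : x != j by apply/eqP => e; move: hjx; rewrite e ltnn.
have [mu [mu_inj hmu]] := pencil (contra_neq esym hxj).
under eq_bigr do rewrite (ccw_facet_extremal hxj hmu _).1.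
under [RHS]eq_bigr do rewrite (ccw_facet_extremal hxj hmu _).2.
have hx : (j.+1 < x)%N.
  have : (x : nat) != j.+1 by rewrite -succ_jE (inj_eq val_inj).
  lia.
rewrite !sum_bool_card; apply: card_extremal_balance => //.
- by move=> w; apply: others_sorient; rewrite eq_sym.
- have hpred : (j.-1 < n)%N by lia.
  exists (Ordinal hpred); rewrite !inE -sorient_rot -andbA; apply/and3P; split.
  + by apply/eqP => /(congr1 (@nat_of_ord n)) /=; lia.
  + by apply/eqP => /(congr1 (@nat_of_ord n)) /=; lia.
  + by apply: sorient_sorted => /=; lia.
- exists (succ_ord j); rewrite !inE succ_neq eq_sym hxs /=.
  by rewrite sorient_swap23 oppr_lt0 sorient_sorted // succ_jE hx ltnSn.
Qed.

Lemma ccw_facet_back x y : ~~ (j < x)%N -> (j < y)%N -> ccw_facet j x y = false.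
Proof.
rewrite -leqNgt leq_eqVlt => /orP [/eqP hx | hx] hy; rewrite /ccw_facet.
  by rewrite (ord_inj hx) sorient_xxy ltxx.
by rewrite (sorient_swap12 x j y) oppr_gt0 ltNge ltW // sorient_sorted ?hx.
Qed.

(* Telescoping over the diagonals from [j]: each facet on the far side of
   one diagonal is on the near side of the next one. *)
Lemma sum_ccw_facet_straddle :
  (\sum_(x : 'I_n | (j < x)%N) \sum_(y : 'I_n | ~~ (j < y)%N) ccw_facet j x y)%N = 1%N.
Proof.
set X := fun x : 'I_n => (j < x)%N.
have hXs : X (succ_ord j) by rewrite /X succ_jE.
have out : (\sum_(x | X x) \sum_y ccw_facet j x y)%N =
    (1 + \sum_(x | X x) \sum_y ccw_facet j y x)%N.
  rewrite (bigD1 (succ_ord j)) //= sum_ccw_facet_succ.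
  rewrite [in RHS](bigD1 (succ_ord j)) //= sum_ccw_facet_to_succ add0n.
  by congr (_ + _)%N; apply: eq_bigr => x /andP [hx hxs]; apply: sum_ccw_facet_diagonal.
have in_X : (\sum_(x | X x) \sum_y ccw_facet j y x)%N =
    (\sum_(x | X x) \sum_(y | X y) ccw_facet j x y)%N.
  rewrite [RHS]exchange_big /=; apply: eq_bigr => x hx.
  rewrite (bigID X) /= [Z in (_ + Z)%N]big1 ?addn0 // => y hy.
  by rewrite ccw_facet_back.
move: out; rewrite in_X.
under eq_bigr do rewrite (bigID X) /=.
by rewrite big_split /= /X; lia.
Qed.

End MiddleVertex.

Definition middle_count j : nat :=
  (\sum_(x : 'I_n) \sum_(y : 'I_n) [&& (j < x)%N, (y < j)%N & upper_facetb [set j; x; y]])%N.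

Lemma middle_countE j : middle_count j = ((0 < j)%N && (j.+1 < n)%N : nat).
Proof.
have [/andP [hj0 hj1] | hj] := boolP ((0 < j)%N && (j.+1 < n)%N).
  rewrite /= -(sum_ccw_facet_straddle hj0 hj1) /middle_count [RHS]big_mkcond.
  apply: eq_bigr => x _; case: (ltnP j x) => hx /=; last by rewrite big1.
  rewrite [RHS]big_mkcond; apply: eq_bigr => y _.
  case: (ltngtP j y) => hy //=.
    by rewrite /ccw_facet -(sorient_rot y j x) sorient_sorted ?hy.
  by rewrite /ccw_facet (ord_inj hy) sorient_xyx ltxx.
rewrite /middle_count big1 // => x _; rewrite big1 // => y _.
move: hj; case: (posnP j) => [-> | _] /=; first by rewrite andbF.
by have := ltn_ord x; case: (ltnP j x) => //=; lia.
Qed.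

Lemma sum_middle_count : (\sum_j middle_count j)%N = (n - 2)%N.
Proof.
under eq_bigr do rewrite middle_countE.
rewrite -(big_mkord xpredT (fun l : nat => ((0 < l)%N && (l.+1 < n)%N : nat))).
have [l ->] : exists l : nat, n = l.+2 by exists (n - 2)%N; lia.
rewrite big_nat_recl // big_nat_recr //= ltnn add0n addn0.
rewrite (eq_big_nat _ _ (F2 := fun => 1%N)); last by move=> i /andP [_ hi]; rewrite !ltnS hi.
by rewrite sum_nat_const_nat muln1 subn0 subn2.
Qed.

(* Each facet is counted once, through its middle index. *)
Definition sorted_facets := [set t : 'I_n * ('I_n * 'I_n) |
  [&& (t.2.2 < t.1)%N, (t.1 < t.2.1)%N & upper_facetb [set t.1; t.2.1; t.2.2]]].

Definition triple_set (t : 'I_n * ('I_n * 'I_n)) : {set 'I_n} := [set t.1; t.2.1; t.2.2].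

Lemma facets_sorted : facets = triple_set @: sorted_facets.
Proof.
apply/setP => A; rewrite !inE; apply/idP/imsetP.
  move=> /andP [/eqP h3 hA].
  have [a [b [c [hab hac hbc eA]]]] := card3_set3 h3.
  have [lo [mid [hi [/andP [h1 h2] hs]]]] := sort3 hab hac hbc.
  have inA w : w \in [:: lo; mid; hi] -> w \in A.
    by move=> /hs; rewrite eA in_set3 !inE orbA.
  have eA' : A = [set mid; hi; lo].
    apply: card3_set3E; rewrite ?inA ?inE ?eqxx ?orbT //.
    - exact: ltn_ord_neq.
    - by rewrite eq_sym ltn_ord_neq.
    - by rewrite eq_sym ltn_ord_neq // (ltn_trans h1 h2).
  by exists (mid, (hi, lo)); rewrite // inE /= h1 h2 -eA' hA.
move=> [[j [x y]]]; rewrite inE /= => /and3P [h1 h2 hA] ->.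
rewrite /triple_set /= hA andbT cards3 //.
- by rewrite ltn_ord_neq.
- by rewrite eq_sym ltn_ord_neq.
- by rewrite eq_sym ltn_ord_neq // (ltn_trans h1 h2).
Qed.

Lemma triple_set_inj : {in sorted_facets &, injective triple_set}.
Proof.
move=> [j [x y]] [j' [x' y']]; rewrite !inE /= => /and3P [h1 h2 _] /and3P [h1' h2' _].
rewrite /triple_set /= => e.
have m w : w \in [set j; x; y] -> [\/ w = j' :> nat, w = x' :> nat | w = y' :> nat].
  by rewrite e in_set3 => /or3P [] /eqP ->; [apply: Or31 | apply: Or32 | apply: Or33].
have m' w : w \in [set j'; x'; y'] -> [\/ w = j :> nat, w = x :> nat | w = y :> nat].
  by rewrite -e in_set3 => /or3P [] /eqP ->; [apply: Or31 | apply: Or32 | apply: Or33].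
have [jin xin yin] : [/\ j \in [set j; x; y], x \in [set j; x; y] & y \in [set j; x; y]].
  by rewrite !in_set3 !eqxx !orbT.
have [jin' xin' yin'] : [/\ j' \in [set j'; x'; y'], x' \in [set j'; x'; y'] &
    y' \in [set j'; x'; y']] by rewrite !in_set3 !eqxx !orbT.
have ex : x = x' :> nat by case: (m x xin); case: (m' x' xin'); lia.
have ey : y = y' :> nat by case: (m y yin); case: (m' y' yin'); lia.
have ej : j = j' :> nat by case: (m j jin); lia.
by rewrite (ord_inj ex) (ord_inj ey) (ord_inj ej).
Qed.

Lemma card_facets : #|facets| = (n - 2)%N.
Proof.
rewrite facets_sorted (card_in_imset triple_set_inj) -sum_middle_count.
have -> : #|sorted_facets| = (\sum_t (t \in sorted_facets))%N.
  by rewrite (sum_bool_card (fun t => t \in sorted_facets)); apply: eq_card.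
rewrite [RHS](eq_bigr (fun j => \sum_(xy : 'I_n * 'I_n)
  [&& (j < xy.1)%N, (xy.2 < j)%N & upper_facetb [set j; xy.1; xy.2]]))%N;
  last by move=> j _; rewrite /middle_count pair_bigA.
rewrite [RHS]pair_bigA; apply: eq_bigr => t _.
by rewrite inE; case: (t.1 < t.2.1)%N; case: (t.2.2 < t.1)%N.
Qed.

Definition edges_in A : nat := #|[set i | (i \in A) && (succ_ord i \in A)]|.

Lemma sum_edges_in_facets : (\sum_(A in facets) edges_in A)%N = n.
Proof.
rewrite (eq_bigr (fun A => \sum_i ((i \in A) && (succ_ord i \in A) : nat))%N) => [|A _].
  rewrite exchange_big /= (eq_bigr (fun => 1%N)) => [|i _].
    by rewrite sum_nat_const card_ord muln1.
  by rewrite sum_in_bool_card card_facets_edge.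
rewrite /edges_in (sum_bool_card (fun i => (i \in A) && (succ_ord i \in A))).
by apply: eq_card => i; rewrite inE.
Qed.

Section AtLeastFour.
Hypothesis n_ge4 : (4 <= n)%N.

Let iter_neq (k l : nat) i : (k < l < 4)%N -> iter k (@succ_ord n) i != iter l (@succ_ord n) i.
Proof. by move=> /andP [hkl hl]; apply: iter_succ_ord_neq; rewrite hkl (leq_trans hl). Qed.

Lemma edges_in_le2 A : #|A| = 3%N -> (edges_in A <= 2)%N.
Proof.
move=> h3; rewrite leqNgt; apply/negP => hgt.
have hE : [set i | (i \in A) && (succ_ord i \in A)] = A.
  apply/eqP; rewrite eqEcard h3 hgt andbT.
  by apply/subsetP => i; rewrite inE => /andP [].
have hs i : i \in A -> succ_ord i \in A by rewrite -{1}hE inE => /andP [].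
have [a ha] : exists a, a \in A by apply/card_gt0P; rewrite h3.
have := card_ge4 ha (hs _ ha) (hs _ (hs _ ha)) (hs _ (hs _ (hs _ ha)))
  (@iter_neq 0%N 1%N a isT) (@iter_neq 0%N 2%N a isT) (@iter_neq 0%N 3%N a isT)
  (@iter_neq 1%N 2%N a isT) (@iter_neq 1%N 3%N a isT) (@iter_neq 2%N 3%N a isT).
by rewrite h3.
Qed.

Lemma neighboring_edges_in A : #|A| = 3%N -> neighboring A = (edges_in A == 2%N).
Proof.
move=> h3.
have s2_neq i : succ_ord (succ_ord i) != i by rewrite eq_sym (@iter_neq 0%N 2%N i).
have nb_set i : [set j : 'I_n | (j : nat) \in [:: (i : nat); (i.+1 %% n)%N; (i.+2 %% n)%N]]
    = [set i; succ_ord i; succ_ord (succ_ord i)].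
  have e2 : succ_ord (succ_ord i) = (i.+2 %% n)%N :> nat by rewrite (iter_succ_ordE 2 i) addn2.
  by apply/setP => j; rewrite inE in_set3 !inE -e2.
apply/idP/idP.
  case/existsP => i /eqP; rewrite nb_set => eA.
  have c2 : #|[set i; succ_ord i]| = 2%N by rewrite cards2 eq_sym succ_neq.
  rewrite eqn_leq edges_in_le2 //= -c2; apply: subset_leq_card.
  apply/subsetP => x; rewrite !inE eA !in_set3 => /orP [] /eqP ->; by rewrite !eqxx ?orbT.
rewrite /edges_in => /cards2P [u [v [huv hE]]].
have : u \in [set i | (i \in A) && (succ_ord i \in A)] by rewrite hE !inE eqxx.
rewrite inE => /andP [hu hsu].
have : v \in [set i | (i \in A) && (succ_ord i \in A)] by rewrite hE !inE eqxx orbT.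
rewrite inE => /andP [hv hsv].
have path3 w : w \in A -> succ_ord w \in A -> succ_ord (succ_ord w) \in A -> neighboring A.
  move=> h1 h2 h3'; apply/existsP; exists w; rewrite nb_set; apply/eqP.
  by apply: card3_set3E; rewrite // ?s2_neq // eq_sym ?succ_neq ?s2_neq.
have [e1 | ne1] := eqVneq (succ_ord u) v; first by apply: (path3 u); rewrite ?e1.
have [e2 | ne2] := eqVneq (succ_ord v) u; first by apply: (path3 v); rewrite ?e2.
have hsuv : succ_ord u != succ_ord v by apply: contra huv => /eqP /succ_ord_inj ->.
have := card_ge4 hu hsu hv hsv; rewrite h3.
by rewrite eq_sym succ_neq huv eq_sym ne2 ne1 hsuv eq_sym succ_neq => /(_ isT isT isT isT isT isT).
Qed.

Lemma disjoint3_edges_in A : disjoint3 A = (edges_in A == 0%N).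
Proof.
rewrite /edges_in cards_eq0; apply/idP/eqP.
  move=> hd; apply/setP => i; rewrite !inE; apply/negP => /andP [hi hsi].
  move/forallP: hd => /(_ i); rewrite hi => /forallP /(_ (succ_ord i)).
  by rewrite hsi /adjacent /nxt /= eqxx.
move=> he; apply/forallP => i; apply/implyP => hi; apply/forallP => j; apply/implyP => hj.
suff edge x y : x \in A -> y \in A -> (y : nat) != nxt x.
  by rewrite /adjacent negb_or !edge.
move=> hx hy; apply/eqP => e.
have : x \in [set i | (i \in A) && (succ_ord i \in A)].
  by rewrite inE hx -(ord_inj (e : val y = val (succ_ord x))) hy.
by rewrite he inE.
Qed.

(* Each facet contains 0, 1 or 2 edges of Q according as it is disjoint,
   intermediate or neighboring, and each edge lies in exactly one facet. *)
Lemma facet_type_counts :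
  let c K := #|[set A : {set 'I_n} | [&& #|A| == 3%N, K A & upper_facetb A]]| in
  (c (@neighboring n) : int) - (c (@disjoint3 n) : int) = 2 /\
  (c (@neighboring n) + c (@disjoint3 n) + c (@intermediate n) = n - 2)%N.
Proof.
move=> c.
have cE K : c K = (\sum_(A in facets) (K A : nat))%N.
  rewrite sum_in_bool_card /c; apply: eq_card => A; rewrite !inE.
  by case: (K A); rewrite ?andbT ?andbF.
have types A : A \in facets ->
    ((neighboring A : nat) + disjoint3 A + intermediate A = 1)%N /\
    (2 * (neighboring A : nat) + intermediate A = edges_in A)%N.
  rewrite inE => /andP [/eqP h3 _].
  rewrite /intermediate neighboring_edges_in // disjoint3_edges_in.
  by have := edges_in_le2 h3; case: (edges_in A) => [|[|[|k]]].
have total : (c (@neighboring n) + c (@disjoint3 n) + c (@intermediate n) = n - 2)%N.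
  rewrite !cE -!big_split /= -card_facets -sum1_card.
  by apply: eq_bigr => A /types [].
have edges : (2 * c (@neighboring n) + c (@intermediate n) = n)%N.
  rewrite !cE -[RHS]sum_edges_in_facets big_distrr /= -big_split /=.
  by apply: eq_bigr => A /types [].
by split => //; apply/eqP; rewrite subr_eq -PoszD; apply/eqP; congr Posz; lia.
Qed.

End AtLeastFour.
End Polygon.

Section CirclesAsPlanes.
Variable R : realFieldType.
Implicit Types (x c : pt R) (al be ga r : R).

Definition sqnorm x : R := x.1 ^+ 2 + x.2 ^+ 2.

Lemma d2_affine x c r :
  d2 x c - r = sqnorm x - affine (2 * c.1) (2 * c.2) (r - sqnorm c) x.
Proof. by rewrite /d2 /sqnorm /affine; ring. Qed.

Lemma d2_affine_center x al be ga :
  d2 x (al / 2, be / 2) - (ga + sqnorm (al / 2, be / 2)) = sqnorm x - affine al be ga x.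
Proof. by rewrite /d2 /sqnorm /affine /=; field. Qed.

Lemma affineN al be ga x : affine (- al) (- be) (- ga) x = - affine al be ga x.
Proof. by rewrite /affine; ring. Qed.

Variables (n : nat) (p : 'I_n -> pt R).

Lemma full_circleE A : full_circle p A <-> upper_facet p (fun i => sqnorm (p i)) A.
Proof.
split => [[c [r [hA hN]]] | [al [be [ga [hA hN]]]]].
  exists (2 * c.1), (2 * c.2), (r - sqnorm c); split => [i hi | j hj].
    by have := d2_affine (p i) c r; rewrite hA //; lra.
  by have := d2_affine (p j) c r; have := hN j hj; lra.
exists (al / 2, be / 2), (ga + sqnorm (al / 2, be / 2)); split => [i hi | j hj].
  by have := d2_affine_center (p i) al be ga; have := hA i hi; lra.
by have := d2_affine_center (p j) al be ga; have := hN j hj; lra.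
Qed.

Lemma empty_circleE A : empty_circle p A <-> upper_facet p (fun i => - sqnorm (p i)) A.
Proof.
split => [[c [r [hA hN]]] | [al [be [ga [hA hN]]]]].
  exists (- (2 * c.1)), (- (2 * c.2)), (- (r - sqnorm c)); split => [i hi | j hj];
    rewrite affineN.
    by have := d2_affine (p i) c r; rewrite hA //; lra.
  by have := d2_affine (p j) c r; have := hN j hj; lra.
exists (- al / 2, - be / 2), (- ga + sqnorm (- al / 2, - be / 2)); split => [i hi | j hj].
  by have := d2_affine_center (p i) (- al) (- be) (- ga); have := hA i hi; rewrite affineN; lra.
by have := d2_affine_center (p j) (- al) (- be) (- ga); have := hN j hj; rewrite affineN; lra.
Qed.

Variable eps : R.
Hypothesis convex : forall i w : 'I_n, w != i -> w != succ_ord i ->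
  0 < sorient p eps i (succ_ord i) w.
Hypothesis no4 : no_four_concyclic p.

(* Four coplanar lifts would put the four vertices on the circle read off
   the plane through the first three of them. *)
Lemma slift_det_sqnorm_neq0 (a b c v : 'I_n) : a != b -> a != c -> a != v ->
  b != c -> b != v -> c != v -> slift_det p eps (fun i => sqnorm (p i)) a b c v != 0.
Proof.
move=> hab hac hav hbc hbv hcv; apply/negP => /eqP hW.
have hD : sorient p eps a b c != 0 by apply: (sorient_neq0 convex).
have [al [be [ga [ha hb hc]]]] :=
  affine_interpolation (sqnorm (p a)) (sqnorm (p b)) (sqnorm (p c)) (sorient_orient hD).
have hv : affine al be ga (p v) = sqnorm (p v).
  move: hW; rewrite (slift_det_affine eps v ha hb hc) => /eqP.
  by rewrite mulf_eq0 oppr_eq0 (negbTE hD) subr_eq0 => /eqP ->.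
apply: (no4 (A := v |: [set a; b; c]) (c := (al / 2, be / 2))
  (r := ga + sqnorm (al / 2, be / 2))).
  by rewrite cardsU1 cards3 // in_set3 !(eq_sym v) (negbTE hav) (negbTE hbv) (negbTE hcv).
have on_circle k : affine al be ga (p k) = sqnorm (p k) ->
    d2 (p k) (al / 2, be / 2) = ga + sqnorm (al / 2, be / 2).
  by move=> hk; have := d2_affine_center (p k) al be ga; rewrite hk; lra.
by move=> i; rewrite !inE -orbA => /or4P [] /eqP ->; apply: on_circle.
Qed.

Lemma slift_det_sqnormN_neq0 (a b c v : 'I_n) : a != b -> a != c -> a != v ->
  b != c -> b != v -> c != v -> slift_det p eps (fun i => - sqnorm (p i)) a b c v != 0.
Proof.
by move=> *; rewrite /slift_det lift_detN mulrN oppr_eq0; apply: slift_det_sqnorm_neq0.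
Qed.

End CirclesAsPlanes.

Theorem mainTheorem1 (R : realFieldType) (n : nat) (p : 'I_n -> pt R) :
  (4 <= n)%N -> convex_polygon p -> no_four_concyclic p ->
  let sp := count_full p (@neighboring n) in
  let tp := count_full p (@disjoint3 n) in
  let up := count_full p (@intermediate n) in
  let sm := count_empty p (@neighboring n) in
  let tm := count_empty p (@disjoint3 n) in
  let um := count_empty p (@intermediate n) in
  [/\ (sp : int) - (tp : int) = 2, (sm : int) - (tm : int) = 2,
      (sp + tp + up = n - 2)%N & (sm + tm + um = n - 2)%N].
Proof.
move=> n_ge4 hconv no4 sp tp up sm tm um.
have n_gt2 : (2 < n)%N by lia.
have [eps convex] : exists eps : R, forall i w : 'I_n, w != i -> w != succ_ord i ->
    0 < sorient p eps i (succ_ord i) w.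
  by case: hconv => h; [exists 1 | exists (-1)] => i w hwi hws;
    rewrite /sorient ?mul1r ?mulN1r ?oppr_gt0; apply: h.
have count_fullE K : count_full p K =
    #|[set A : {set 'I_n} | [&& #|A| == 3%N, K A & upper_facetb p (fun i => sqnorm (p i)) A]]|.
  apply: eq_card => A; rewrite !inE; congr [&& _, _ & _].
  by case: (full_circleE p A) => h1 h2; apply/asboolP/upper_facetP.
have count_emptyE K : count_empty p K =
    #|[set A : {set 'I_n} | [&& #|A| == 3%N, K A & upper_facetb p (fun i => - sqnorm (p i)) A]]|.
  apply: eq_card => A; rewrite !inE; congr [&& _, _ & _].
  by case: (empty_circleE p A) => h1 h2; apply/asboolP/upper_facetP.
have [f1 f2] := facet_type_counts convex (slift_det_sqnorm_neq0 convex no4) n_gt2 n_ge4.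
have [e1 e2] := facet_type_counts convex (slift_det_sqnormN_neq0 convex no4) n_gt2 n_ge4.
by split; rewrite /sp /tp /up /sm /tm /um ?count_fullE ?count_emptyE.
Qed.
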